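(* Let $\mathbb{K}$ be a field of characteristic $2$, let $(A,\cdot,\{-,-\},(-)^{\{2\}})$ be a restricted Poisson algebra, let $k\ge1$, and let $(A^t_k,\cdot,\mu_{(k)},\omega_{(k)})$ be a formal deformation of order $k$ of $A$, where $\mu_{(k)}=\{-,-\}+\sum_{i=1}^kt^i\mu_i$ and $\omega_{(k)}=(-)^{\{2\}}+\sum_{i=1}^kt^i\omega_i$. Let $(\mu_{k+1},\omega_{k+1})\in C^2_{\rm PA}(A)$ and set $\mu_{(k+1)}=\mu_{(k)}+t^{k+1}\mu_{k+1}$, $\omega_{(k+1)}=\omega_{(k)}+t^{k+1}\omega_{k+1}$. Then $(A^t_{k+1},\cdot,\mu_{(k+1)},\omega_{(k+1)})$ is a formal deformation of order $k+1$ of $A$ if and only if $(\mathrm{obs}^{(1)}_{k+1},\mathrm{obs}^{(2)}_{k+1})=\mathrm{d}^2_{\rm PA}(\mu_{k+1},\omega_{k+1})$, where for $x,y,z\in A$, $\mathrm{obs}^{(1)}_{k+1}(x,y,z)=\sum_{i=1}^k\big(\mu_i(x,\mu_{k+1-i}(y,z))+\mu_i(y,\mu_{k+1-i}(z,x))+\mu_i(z,\mu_{k+1-i}(x,y))\big)$ and $\mathrm{obs}^{(2)}_{k+1}(x,y)=\sum_{i=1}^k\big(\mu_i(y,\omega_{k+1-i}(x))+\mu_i(x,\mu_{k+1-i}(x,y))\big)$.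
   Context: $\mathbb{K}$ has characteristic $2$. Restricted Poisson algebra: commutative associative $(A,\cdot)$ with Lie bracket satisfying $\{ab,c\}=a\{b,c\}+b\{a,c\}$, with a map $(-)^{\{2\}}$ making $(A,\{,\})$ a restricted Lie algebra ($(\lambda x)^{\{2\}}=\lambda^2x^{\{2\}}$, $\mathrm{ad}_{x^{\{2\}}}=\mathrm{ad}_x^2$, $(x+y)^{\{2\}}=x^{\{2\}}+y^{\{2\}}+\{x,y\}$) and $(xy)^{\{2\}}=x^2y^{\{2\}}+y^2x^{\{2\}}+xy\{x,y\}$. $\mathfrak{X}^k(A)$: alternating $k$-linear maps $A^k\to A$ that are derivations of $\cdot$ in each argument. For $n\ge2$, $C^n_{\rm PA}(A)$ = pairs $(\varphi,\omega)$ with $\varphi\in\mathfrak{X}^n(A)$, $\omega:A\times A^{n-2}\to A$ alternating multilinear in the last $n-2$ arguments, $\omega(\lambda x,z)=\lambda^2\omega(x,z)$, $\omega(x+y,z)=\omega(x,z)+\omega(y,z)+\varphi(x,y,z)$, $\omega(xy,z)=x^2\omega(y,z)+y^2\omega(x,z)+xy\varphi(x,y,z)$, $\omega(x,..,z_iz_i',..)=z_i\omega(x,..,z_i',..)+z_i'\omega(x,..,z_i,..)$. $\mathrm{d}^2_{\rm PA}(\varphi,\omega)=(\mathrm{d}_{\rm CE}\varphi,\delta^2\omega)$ with $\mathrm{d}_{\rm CE}\varphi(x,y,z)=\varphi(\{x,y\},z)+\varphi(\{x,z\},y)+\varphi(\{y,z\},x)+\{x,\varphi(y,z)\}+\{y,\varphi(x,z)\}+\{z,\varphi(x,y)\}$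 and $\delta^2\omega(x,z)=\{x,\varphi(x,z)\}+\{z,\omega(x)\}+\varphi(x^{\{2\}},z)+\varphi(\{x,z\},x)$. $\mathbb{K}^t_k=\mathbb{K}[t]/(t^{k+1})$, $A^t_k=A\otimes\mathbb{K}^t_k$. A formal deformation of order $k$ is given by $\mu_{(k)},\omega_{(k)}$ as in the claim with all $(\mu_i,\omega_i)\in C^2_{\rm PA}(A)$ such that $(A^t_k,\mu_{(k)},\omega_{(k)})$ is a restricted Lie algebra over $\mathbb{K}^t_k$ (with $\mu_{(k)}$ extended $\mathbb{K}^t_k$-bilinearly and $\omega_{(k)}$ extended by $\omega(\lambda X)=\lambda^2\omega(X)$, $\omega(X+Y)=\omega(X)+\omega(Y)+\mu(X,Y)$). *)

From HB Require Import structures.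
From mathcomp Require Import all_boot all_order all_algebra.
Set Implicit Arguments. Unset Strict Implicit. Unset Printing Implicit Defensive.
Import GRing.Theory.
Local Open Scope ring_scope.

(* Conventions:
   - A is a K-vector space (lmodType K); the commutative associative product
     is an explicit operation [mul] (no unit required).
   - An element of A^t_n = A (x) K[t]/(t^(n+1)) is represented by its
     coefficient sequence X : nat -> A (X = sum_j t^j X j), only the
     coefficients of index <= n being relevant; equality in A^t_n is [teq n].
     Scalars of K^t_n are likewise sequences nat -> K.
   - Families mu, om : nat -> ... ; index 0 of the deformation is the
     bracket / restricted map of A (see [fam], [famo]). *)

Section Defs.
Variables (K : fieldType) (A : lmodType K).

Definition comm_assoc (mul : A -> A -> A) : Prop :=
  [/\ forall x y z, mul (x + y) z = mul x z + mul y z,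
      forall (a : K) x y, mul (a *: x) y = a *: mul x y,
      forall x y, mul x y = mul y x &
      forall x y z, mul x (mul y z) = mul (mul x y) z].

Definition bilinear_alt (f : A -> A -> A) : Prop :=
  [/\ forall x y z, f (x + y) z = f x z + f y z,
      forall x y z, f x (y + z) = f x y + f x z,
      forall (a : K) x y, f (a *: x) y = a *: f x y,
      forall (a : K) x y, f x (a *: y) = a *: f x y &
      forall x, f x x = 0].

Definition lie_bracket (br : A -> A -> A) : Prop :=
  bilinear_alt br /\
  forall x y z, br x (br y z) + br y (br z x) + br z (br x y) = 0.

(* restricted Lie algebra (A, br, p) over K in characteristic 2;
   ad_{p x} = ad_x^2 is  br (p x) y = br x (br x y) for all y *)
Definition restricted_lie (br : A -> A -> A) (p : A -> A) : Prop :=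
  [/\ lie_bracket br,
      forall (a : K) x, p (a *: x) = a ^+ 2 *: p x,
      forall x y, br (p x) y = br x (br x y) &
      forall x y, p (x + y) = p x + p y + br x y].

Definition restricted_poisson (mul br : A -> A -> A) (p : A -> A) : Prop :=
  [/\ comm_assoc mul, restricted_lie br p,
      forall a b c, br (mul a b) c = mul a (br b c) + mul b (br a c) &
      forall x y, p (mul x y) =
        mul (mul x x) (p y) + mul (mul y y) (p x) + mul (mul x y) (br x y)].

Definition multider2 (mul : A -> A -> A) (phi : A -> A -> A) : Prop :=
  [/\ bilinear_alt phi,
      forall a b c, phi (mul a b) c = mul a (phi b c) + mul b (phi a c) &
      forall a b c, phi c (mul a b) = mul a (phi c b) + mul b (phi c a)].

Definition C2PA (mul : A -> A -> A) (phi : A -> A -> A) (om : A -> A) : Prop :=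
  [/\ multider2 mul phi,
      forall (a : K) x, om (a *: x) = a ^+ 2 *: om x,
      forall x y, om (x + y) = om x + om y + phi x y &
      forall x y, om (mul x y) =
        mul (mul x x) (om y) + mul (mul y y) (om x) + mul (mul x y) (phi x y)].

Definition teq (n : nat) (X Y : nat -> A) : Prop :=
  forall m, (m <= n)%N -> X m = Y m.

Definition tzero : nat -> A := fun _ => 0.

Definition tadd (X Y : nat -> A) : nat -> A := fun m => X m + Y m.

Definition tmulK (l l' : nat -> K) : nat -> K :=
  fun m => \sum_(a < m.+1) l a * l' (m - a)%N.

Definition tscale (l : nat -> K) (X : nat -> A) : nat -> A :=
  fun m => \sum_(a < m.+1) l a *: X (m - a)%N.

Definition tbr (F : nat -> A -> A -> A) (X Y : nat -> A) : nat -> A :=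
  fun m => \sum_(i < m.+1) \sum_(j < (m - i).+1) F i (X j) (Y (m - i - j)%N).

(* extension of  sum_i t^i G i  to A^t_n by omega(lambda X) = lambda^2 omega(X),
   omega(X+Y) = omega(X) + omega(Y) + mu(X,Y), where mu = tbr F:
   omega(sum_j t^j X_j) = sum_j t^(2j) omega(X_j) + sum_(j<l) t^(j+l) mu(X_j,X_l) *)
Definition tom (F : nat -> A -> A -> A) (G : nat -> A -> A) (X : nat -> A)
  : nat -> A :=
  fun m => \sum_(j < m.+1 | (2 * j <= m)%N) G (m - 2 * j)%N (X j)
         + \sum_(i < m.+1) \sum_(j < (m - i).+1 | (j < m - i - j)%N)
              F i (X j) (X (m - i - j)%N).

Definition restricted_lie_trunc (n : nat)
  (mu : (nat -> A) -> (nat -> A) -> (nat -> A)) (om : (nat -> A) -> (nat -> A))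
  : Prop :=
  (forall X Y Z, teq n (mu (tadd X Y) Z) (tadd (mu X Z) (mu Y Z))) /\
  (forall X Y Z, teq n (mu X (tadd Y Z)) (tadd (mu X Y) (mu X Z))) /\
  (forall l X Y, teq n (mu (tscale l X) Y) (tscale l (mu X Y))) /\
  (forall l X Y, teq n (mu X (tscale l Y)) (tscale l (mu X Y))) /\
  (forall X, teq n (mu X X) tzero) /\
  (forall X Y Z, teq n (tadd (tadd (mu X (mu Y Z)) (mu Y (mu Z X))) (mu Z (mu X Y)))
                       tzero) /\
  (forall l X, teq n (om (tscale l X)) (tscale (tmulK l l) (om X))) /\
  (forall X Y, teq n (om (tadd X Y)) (tadd (tadd (om X) (om Y)) (mu X Y))) /\
  (forall X Y, teq n (mu (om X) Y) (mu X (mu X Y))).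

Definition fam (br : A -> A -> A) (mu : nat -> A -> A -> A) : nat -> A -> A -> A :=
  fun i => if i == 0%N then br else mu i.

Definition famo (p : A -> A) (om : nat -> A -> A) : nat -> A -> A :=
  fun i => if i == 0%N then p else om i.

Definition formal_deformation (mul br : A -> A -> A) (p : A -> A)
  (mu : nat -> A -> A -> A) (om : nat -> A -> A) (n : nat) : Prop :=
  (forall i, (1 <= i <= n)%N -> C2PA mul (mu i) (om i)) /\
  restricted_lie_trunc n (tbr (fam br mu)) (tom (fam br mu) (famo p om)).

Definition obs1 (mu : nat -> A -> A -> A) (k : nat) (x y z : A) : A :=
  \sum_(1 <= i < k.+1)
     (mu i x (mu (k.+1 - i)%N y z) + mu i y (mu (k.+1 - i)%N z x)
      + mu i z (mu (k.+1 - i)%N x y)).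

Definition obs2 (mu : nat -> A -> A -> A) (om : nat -> A -> A) (k : nat) (x y : A) : A :=
  \sum_(1 <= i < k.+1)
     (mu i y (om (k.+1 - i)%N x) + mu i x (mu (k.+1 - i)%N x y)).

Definition dCE (br phi : A -> A -> A) (x y z : A) : A :=
  phi (br x y) z + phi (br x z) y + phi (br y z) x
  + br x (phi y z) + br y (phi x z) + br z (phi x y).

Definition delta2 (br : A -> A -> A) (p : A -> A) (phi : A -> A -> A) (om : A -> A)
  (x z : A) : A :=
  br x (phi x z) + br z (om x) + phi (p x) z + phi (br x z) x.

End Defs.

From HB Require Import structures.
From mathcomp Require Import all_boot all_order all_algebra.
From mathcomp Require Import zify.
Set Implicit Arguments. Unset Strict Implicit. Unset Printing Implicit Defensive.
Import GRing.Theory.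
Local Open Scope ring_scope.

(* An element of A^t_n is a coefficient sequence X = X_0 + t X'.  The extended
   bracket is biadditive and commutes with multiplication by t in each argument,
   while the extended restricted map satisfies om (t X) = t^2 om X and
   om (X + Y) = om X + om Y + [X, Y].  Splitting off constant terms and inducting
   on the degree, the Jacobi identity and ad_(om X) = ad_X^2 hold in A^t_n as soon
   as they hold on constants, i.e. iff for every s <= n their t^s-coefficients
   vanish on A; the remaining axioms of a restricted Lie algebra over K^t_n hold
   automatically.  For s <= k these coefficient identities are part of the order-k
   hypothesis.  For s = k+1, separating the summands that involve mu_(k+1) and
   om_(k+1) writes each coefficient as obstruction + d^2_PA(mu_(k+1), om_(k+1)),
   which vanishes iff the two are equal because the characteristic is 2. *)

Section BilinearAlt.
Variables (K : fieldType) (A : lmodType K) (f : A -> A -> A).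
Hypothesis hf : bilinear_alt f.

Lemma balt_addl x y z : f (x + y) z = f x z + f y z. Proof. by case: hf. Qed.
Lemma balt_addr x y z : f x (y + z) = f x y + f x z. Proof. by case: hf. Qed.
Lemma balt_scalel a x y : f (a *: x) y = a *: f x y. Proof. by case: hf. Qed.
Lemma balt_scaler a x y : f x (a *: y) = a *: f x y. Proof. by case: hf. Qed.
Lemma balt_alt x : f x x = 0. Proof. by case: hf. Qed.

Lemma balt0l y : f 0 y = 0.
Proof. by have := balt_scalel 0 0 y; rewrite !scale0r. Qed.

Lemma balt0r y : f y 0 = 0.
Proof. by have := balt_scaler 0 y 0; rewrite !scale0r. Qed.

End BilinearAlt.

Section Char2.
Variables (K : fieldType) (A : lmodType K).
Hypothesis pcharK2 : (2 \in [pchar K])%N.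

Lemma addvv_pchar2 (x : A) : x + x = 0.
Proof. by rewrite -[x]scale1r -scalerDl addrr_pchar2 ?scale0r. Qed.

Lemma addv_eq0_pchar2 (x y : A) : x + y = 0 <-> x = y.
Proof.
split=> [xy0|->]; last exact: addvv_pchar2.
by rewrite -[x]addr0 -(addvv_pchar2 y) addrA xy0 add0r.
Qed.

Lemma balt_sym (f : A -> A -> A) : bilinear_alt f -> forall x y, f x y = f y x.
Proof.
move=> hf x y; apply/addv_eq0_pchar2; have := balt_alt hf (x + y).
by rewrite (balt_addl hf) !(balt_addr hf) !(balt_alt hf) add0r addr0.
Qed.

End Char2.

Section TruncatedSeq.
Variables (K : fieldType) (A : lmodType K).

Lemma sum_triangle_exchange (f : nat -> nat -> A) M :
  \sum_(a < M.+1) \sum_(b < (M - a).+1) f a b =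
  \sum_(b < M.+1) \sum_(a < (M - b).+1) f a b.
Proof.
have widen (g : nat -> A) a : (a <= M)%N ->
    \sum_(b < (M - a).+1) g b = \sum_(b < M.+1 | (a + b <= M)%N) g b.
  move=> aM; rewrite (big_ord_widen M.+1) ?ltnS ?leq_subr //.
  by apply: eq_bigl => b; lia.
rewrite (eq_bigr _ (fun (a : 'I_M.+1) _ => widen (f a) a (leq_ord a))).
rewrite [RHS](eq_bigr _ (fun (b : 'I_M.+1) _ => widen (f^~ b) b (leq_ord b))).
under eq_bigr do rewrite big_mkcond.
rewrite exchange_big; apply: eq_bigr => b _; rewrite [RHS]big_mkcond.
by apply: eq_bigr => a _; rewrite addnC.
Qed.

Lemma sum_antidiag_split (f : nat -> nat -> A) M :
  \sum_(j < M.+1) f j (M - j)%N =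
  \sum_(j < M.+1 | (j < M - j)%N) (f j (M - j)%N + f (M - j)%N j)
  + \sum_(j < M.+1 | j == (M - j)%N :> nat) f j (M - j)%N.
Proof.
rewrite (bigID (fun j : 'I_M.+1 => (j < M - j)%N)) /= big_split /= -addrA.
congr (_ + _); rewrite (bigID (fun j : 'I_M.+1 => j == (M - j)%N :> nat)) /= addrC.
congr (_ + _); last by apply: eq_bigl => j; have := ltn_ord j; lia.
rewrite (reindex_inj rev_ord_inj) /=; apply: eq_big => j; first by have := ltn_ord j; lia.
by move=> _; have jM := ltn_ord j; congr (f _ _); lia.
Qed.

Definition tshift (X : nat -> A) : nat -> A := fun j => if j is j'.+1 then X j' else 0.
Definition tconst (x : A) : nat -> A := fun j => if j is 0%N then x else 0.
Definition tscaleC (c : K) (X : nat -> A) : nat -> A := fun j => c *: X j.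

Lemma teq_le m j (X Y : nat -> A) : (j <= m)%N -> teq m X Y -> teq j X Y.
Proof. by move=> jm XY i ij; apply: XY; lia. Qed.

Lemma teq_tshift m (X Y : nat -> A) : teq m X Y -> teq m (tshift X) (tshift Y).
Proof. by move=> XY [|j] jm //=; apply: XY; lia. Qed.

Lemma teq_head_tshift m (X : nat -> A) :
  teq m X (tadd (tconst (X 0%N)) (tshift (fun j => X j.+1))).
Proof. by move=> [|j] _; rewrite /tadd /= ?addr0 ?add0r. Qed.

Lemma tscale_head (l : nat -> K) (X : nat -> A) m :
  tscale l X m = l 0%N *: X m + tshift (tscale (fun j => l j.+1) X) m.
Proof.
rewrite /tscale big_ord_recl subn0; congr (_ + _).
case: m => [|m]; first by rewrite big_ord0.
by apply: eq_bigr => a _; rewrite /bump /= subSS.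
Qed.

Lemma tscale_congr (l l' : nat -> K) (X Y : nat -> A) m :
  (forall j, (j <= m)%N -> l j = l' j) -> teq m X Y -> tscale l X m = tscale l' Y m.
Proof.
move=> ll' XY; apply: eq_bigr => a _.
by rewrite ll' ?XY //; have := ltn_ord a; lia.
Qed.

Lemma tscale_eq0 (l : nat -> K) (X : nat -> A) m :
  (forall j, (j <= m)%N -> X j = 0) -> tscale l X m = 0.
Proof.
move=> X0; rewrite /tscale big1 // => a _.
by rewrite X0 ?scaler0 //; have := ltn_ord a; lia.
Qed.

(* The cross terms [l a * l b + l b * l a] of the square cancel in characteristic 2. *)
Lemma tmulK_sqS (l : nat -> K) j : (2 \in [pchar K])%N ->
  tmulK l l j.+1 =
  if j is j'.+1 then tmulK (fun i => l i.+1) (fun i => l i.+1) j' else 0.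
Proof.
move=> pcharK2; rewrite /tmulK big_ord_recl big_ord_recr /= subn0 subnn /bump /=.
rewrite [X in _ + X]addrC addrA [l j.+1 * _]mulrC addrr_pchar2 // add0r.
case: j => [|j]; first by rewrite big_ord0.
by apply: eq_bigr => a _; have aj := ltn_ord a; rewrite /bump /=; congr (_ * l _); lia.
Qed.

Lemma sum_half_tshift (f : A -> A -> A) (X : nat -> A) M :
  (forall y, f 0 y = 0) ->
  \sum_(j < M.+1 | (j < M - j)%N) f (tshift X j) (tshift X (M - j)%N) =
  if M is M'.+2 then \sum_(j < M'.+1 | (j < M' - j)%N) f (X j) (X (M' - j)%N)
  else 0.
Proof.
move=> f0; rewrite big_mkcond big_ord_recl /= f0 if_same add0r.
case: M => [|[|M]]; first by rewrite big_ord0.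
  by rewrite big_ord1.
rewrite big_ord_recr /bump /= ifF ?addr0; last by apply/negbTE; lia.
rewrite [RHS]big_mkcond; apply: eq_bigr => j _; rewrite /bump /=.
have jM := ltn_ord j.
have -> : (j.+1 < M.+2 - j.+1)%N = (j < M - j)%N by lia.
by case: ifP => // _; rewrite subSS subSn //; lia.
Qed.

Lemma sum_diag_tshift (g : nat -> A -> A) (X : nat -> A) m :
  (forall i, (i <= m)%N -> g i 0 = 0) ->
  \sum_(j < m.+1 | (2 * j <= m)%N) g (m - 2 * j)%N (tshift X j) =
  if m is m'.+2 then \sum_(j < m'.+1 | (2 * j <= m')%N) g (m' - 2 * j)%N (X j)
  else 0.
Proof.
move=> g0; rewrite big_mkcond big_ord_recl /= g0 ?leq_subr // add0r /bump /=.
case: m g0 => [|[|m]] g0; first by rewrite big_ord0.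
  by rewrite big_ord1.
rewrite big_ord_recr /= ifF ?addr0; last by apply/negbTE; lia.
rewrite [RHS]big_mkcond; apply: eq_bigr => j _; rewrite /bump /=.
have jm := ltn_ord j.
have -> : (2 * j.+1 <= m.+2)%N = (2 * j <= m)%N by lia.
by case: ifP => // _; congr (g _ _); lia.
Qed.

End TruncatedSeq.

Section Truncated.
Variables (K : fieldType) (A : lmodType K).
Implicit Types (X Y Z : nat -> A).
Variables (n : nat) (F : nat -> A -> A -> A) (G : nat -> A -> A).
Hypothesis balt_F : forall i, (i <= n)%N -> bilinear_alt (F i).
Hypothesis quadZ_G :
  forall i, (i <= n)%N -> forall (a : K) x, G i (a *: x) = a ^+ 2 *: G i x.
Hypothesis quadD_G :
  forall i, (i <= n)%N -> forall x y, G i (x + y) = G i x + G i y + F i x y.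

Lemma balt_F_ord m (i : 'I_m.+1) : (m <= n)%N -> bilinear_alt (F i).
Proof. by move=> mn; apply: balt_F; apply: leq_trans (leq_ord i) mn. Qed.

Lemma quad0_G i : (i <= n)%N -> G i 0 = 0.
Proof. by move=> i_n; have := quadZ_G i_n 0 0; rewrite !scale0r expr0n scale0r. Qed.

Lemma tbr_congr X X' Y Y' m : teq m X X' -> teq m Y Y' ->
  tbr F X Y m = tbr F X' Y' m.
Proof.
move=> XX' YY'; apply: eq_bigr => i _; apply: eq_bigr => j _.
by have im := ltn_ord i; have jmi := ltn_ord j; rewrite XX' ?YY' //; lia.
Qed.

Lemma tbr_congrl X X' Y m : teq m X X' -> tbr F X Y m = tbr F X' Y m.
Proof. by move=> XX'; apply: tbr_congr. Qed.

Lemma tbr_congrr X Y Y' m : teq m Y Y' -> tbr F X Y m = tbr F X Y' m.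
Proof. exact: tbr_congr. Qed.

Lemma tom_congr X X' m : teq m X X' -> tom F G X m = tom F G X' m.
Proof.
move=> XX'; congr (_ + _).
  by apply: eq_bigr => j _; have jm := ltn_ord j; rewrite XX' //; lia.
apply: eq_bigr => i _; apply: eq_bigr => j _.
by have im := ltn_ord i; have jmi := ltn_ord j; rewrite !XX' //; lia.
Qed.

Section FixedDegree.
Variables (m : nat) (mn : (m <= n)%N).

Lemma tbr_addl X Y Z : tbr F (tadd X Y) Z m = tbr F X Z m + tbr F Y Z m.
Proof.
rewrite -big_split; apply: eq_bigr => i _.
by rewrite -big_split; apply: eq_bigr => j _; rewrite (balt_addl (balt_F_ord i mn)).
Qed.

Lemma tbr_addr X Y Z : tbr F X (tadd Y Z) m = tbr F X Y m + tbr F X Z m.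
Proof.
rewrite -big_split; apply: eq_bigr => i _.
by rewrite -big_split; apply: eq_bigr => j _; rewrite (balt_addr (balt_F_ord i mn)).
Qed.

Lemma tbr_constl x Y : tbr F (tconst x) Y m = \sum_(i < m.+1) F i x (Y (m - i)%N).
Proof.
apply: eq_bigr => i _; rewrite big_ord_recl subn0 big1 ?addr0 // => j _.
by rewrite (balt0l (balt_F_ord i mn)).
Qed.

Lemma tbr_const x y : tbr F (tconst x) (tconst y) m = F m x y.
Proof.
rewrite tbr_constl big_ord_recr /= subnn big1 ?add0r // => i _.
have im := ltn_ord i; case E: (m - i)%N => [|k]; first lia.
by rewrite (balt0r (balt_F_ord (widen_ord (leqnSn m) i) mn)).
Qed.

Lemma tom_const x : tom F G (tconst x) m = G m x.
Proof.
rewrite /tom big_mkcond big_ord_recl muln0 subn0 /=.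
rewrite big1 ?addr0; last by move=> j _; rewrite quad0_G ?if_same //; lia.
rewrite [X in _ + X]big1 ?addr0 // => i _; apply: big1 => -[[|j] jmi] /= ltj.
  case E: (m - i - 0)%N ltj => [|k] //= _.
  by rewrite (balt0r (balt_F_ord i mn)).
by rewrite (balt0l (balt_F_ord i mn)).
Qed.

Lemma tbr_scaleC c X Y : tbr F (tscaleC c X) Y m = c *: tbr F X Y m.
Proof.
rewrite scaler_sumr; apply: eq_bigr => i _; rewrite scaler_sumr.
by apply: eq_bigr => j _; rewrite (balt_scalel (balt_F_ord i mn)).
Qed.

Lemma tom_scaleC c X : tom F G (tscaleC c X) m = c ^+ 2 *: tom F G X m.
Proof.
rewrite /tom scalerDr !scaler_sumr; congr (_ + _).
  by apply: eq_bigr => j _; rewrite quadZ_G //; lia.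
apply: eq_bigr => i _; rewrite scaler_sumr; apply: eq_bigr => j _.
have Fi := balt_F_ord i mn.
by rewrite /tscaleC (balt_scalel Fi) (balt_scaler Fi) scalerA expr2.
Qed.

Lemma tbr_tshiftl X Y : tbr F (tshift X) Y m = tshift (tbr F X Y) m.
Proof.
case: m mn => [|m'] m'n; first by rewrite /tbr !big_ord1 (balt0l (balt_F m'n)).
rewrite /tbr big_ord_recr /= subnn big_ord1 /= (balt0l (balt_F m'n)) addr0.
apply: eq_bigr => i _ /=; rewrite subSn ?leq_ord // big_ord_recl.
rewrite (balt0l (balt_F_ord (widen_ord (leqnSn _) i) m'n)) add0r.
apply: eq_bigr => j _; rewrite /bump /=.
by have jmi := ltn_ord j; have im := ltn_ord i; congr (F _ _ (Y _)); lia.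
Qed.

Lemma tom_tshift X : tom F G (tshift X) m = tshift (tshift (tom F G X)) m.
Proof.
rewrite /tom sum_diag_tshift; last by move=> i im; apply: quad0_G; lia.
under eq_bigr => i _ do rewrite (sum_half_tshift _ _ (balt0l (balt_F_ord i mn))).
case: m mn => [|[|m']] m'n; first by rewrite big_ord1 /= addr0.
  by rewrite big_ord_recr big_ord1 /= !addr0.
rewrite big_ord_recr /= subnn addr0 big_ord_recr /= subSnn addr0 /=.
congr (_ + _); apply: eq_bigr => i _ /=.
by have -> : (m'.+2 - i = (m' - i).+2)%N by have := leq_ord i; lia.
Qed.

Lemma sum_tbr_diag X Y :
  \sum_(i < m.+1) \sum_(j < (m - i).+1 | j == (m - i - j)%N :> nat)
     F i (X j) (Y (m - i - j)%N) =
  \sum_(j < m.+1 | (2 * j <= m)%N) F (m - 2 * j)%N (X j) (Y j).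
Proof.
under eq_bigr do rewrite big_mkcond.
rewrite (sum_triangle_exchange (fun i j => if j == (m - i - j)%N :> nat then
   F i (X j) (Y (m - i - j)%N) else 0)).
rewrite [RHS]big_mkcond; apply: eq_bigr => j _; rewrite -big_mkcond /=.
rewrite (eq_bigl (fun i : 'I_(m - j).+1 => (2 * j <= m)%N && (i == (m - 2 * j)%N :> nat)));
  last by move=> i; have := ltn_ord j; have := ltn_ord i; lia.
rewrite (big_ord1_cond_eq _ (fun i => F i (X j) (Y (m - i - j)%N)) (fun _ => (2 * j <= m)%N)).
have jm := ltn_ord j; case: (leqP (2 * j) m) => [j2m|]; rewrite ?andbF ?andbT //.
by rewrite ifT; [congr (F _ _ (Y _)); lia | lia].
Qed.

Lemma tom_eq0 X : teq m X (fun=> 0) -> tom F G X m = 0.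
Proof.
move=> X0; rewrite /tom big1 ?add0r.
  apply: big1 => i _; apply: big1 => j _.
  have im := ltn_ord i; have jmi := ltn_ord j.
  by rewrite X0 ?(balt0l (balt_F_ord i mn)) //; lia.
by move=> j _; rewrite X0 ?quad0_G //; have := ltn_ord j; lia.
Qed.

End FixedDegree.

Hypothesis pcharK2 : (2 \in [pchar K])%N.

Section FixedDegreeChar2.
Variables (m : nat) (mn : (m <= n)%N).

Lemma tbr_sym X Y : tbr F X Y m = tbr F Y X m.
Proof.
apply: eq_bigr => i _; rewrite (reindex_inj rev_ord_inj); apply: eq_bigr => j _.
rewrite (balt_sym pcharK2 (balt_F_ord i mn)); have := ltn_ord i; have := ltn_ord j.
by move=> /= jmi im; congr (F _ (Y _) (X _)); lia.
Qed.

Lemma tbr_constr X y : tbr F X (tconst y) m = \sum_(i < m.+1) F i (X (m - i)%N) y.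
Proof.
rewrite tbr_sym (tbr_constl mn); apply: eq_bigr => i _.
by rewrite (balt_sym pcharK2 (balt_F_ord i mn)).
Qed.

Lemma tom_add X Y : tom F G (tadd X Y) m = tom F G X m + tom F G Y m + tbr F X Y m.
Proof.
set D := fun (U V : nat -> A) =>
  \sum_(j < m.+1 | (2 * j <= m)%N) F (m - 2 * j)%N (U j) (V j).
set H := fun (U V : nat -> A) => \sum_(i < m.+1)
  \sum_(j < (m - i).+1 | (j < m - i - j)%N) F i (U j) (V (m - i - j)%N).
have diag_part : \sum_(j < m.+1 | (2 * j <= m)%N) G (m - 2 * j)%N (tadd X Y j) =
  \sum_(j < m.+1 | (2 * j <= m)%N) G (m - 2 * j)%N (X j) +
  \sum_(j < m.+1 | (2 * j <= m)%N) G (m - 2 * j)%N (Y j) + D X Y.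
  by rewrite /D -!big_split; apply: eq_bigr => j _; rewrite quadD_G //; lia.
have half_part : H (tadd X Y) (tadd X Y) = H X X + H Y Y + (H X Y + H Y X).
  rewrite /H -!big_split; apply: eq_bigr => i _; rewrite -!big_split.
  apply: eq_bigr => j _; have Fi := balt_F_ord i mn.
  by rewrite /tadd (balt_addl Fi) !(balt_addr Fi) [LHS](AC (2*2) ((1*4)*(2*3))).
have tbr_part : tbr F X Y m = H X Y + H Y X + D X Y.
  rewrite /D /H -(sum_tbr_diag mn) -!big_split; apply: eq_bigr => i _.
  rewrite (sum_antidiag_split (fun j k => F i (X j) (Y k))) big_split /=; congr (_ + _ + _).
  by apply: eq_bigr => j _; rewrite (balt_sym pcharK2 (balt_F_ord i mn)).
rewrite /tom diag_part -/(H _ _) half_part tbr_part.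
by rewrite [LHS](AC (3*3) ((1*4)*(2*5)*(6*3))).
Qed.

End FixedDegreeChar2.

Lemma tbr_tshiftr m : (m <= n)%N -> forall X Y, tbr F X (tshift Y) m = tshift (tbr F X Y) m.
Proof.
move=> mn X Y; rewrite (tbr_sym mn) (tbr_tshiftl mn).
by apply: (teq_tshift (fun j jm => tbr_sym (leq_trans jm mn) Y X)).
Qed.

Lemma tbr_tscalel m : (m <= n)%N -> forall l X Y,
  tbr F (tscale l X) Y m = tscale l (tbr F X Y) m.
Proof.
elim: m => [|m IH] mn l X Y;
  rewrite (tbr_congrl _ (fun j _ => tscale_head l X j)) tbr_addl // tbr_scaleC //;
  rewrite tbr_tshiftl // tscale_head //=.
by rewrite IH //; apply: ltnW.
Qed.

Lemma tbr_tscaler m : (m <= n)%N -> forall l X Y,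
  tbr F X (tscale l Y) m = tscale l (tbr F X Y) m.
Proof.
move=> mn l X Y; rewrite (tbr_sym mn) (tbr_tscalel mn).
apply: tscale_congr => // j jm.
by rewrite tbr_sym //; apply: leq_trans mn.
Qed.

Lemma tbr_alt m : (m <= n)%N -> forall X, tbr F X X m = 0.
Proof.
move=> mn X; have := tom_add mn X X.
by rewrite (addvv_pchar2 pcharK2) add0r tom_eq0 // => j _; apply: addvv_pchar2.
Qed.

(* Write [l X = l 0 X + t W] with [W = l' X]: the cross term [X, W] = l' [X, X] vanishes and
   [om (t W) = t^2 om W], matching [(l l)_1 = 0] and [(l l)_(j+2) = (l' l')_j]. *)
Lemma tom_tscale m : (m <= n)%N -> forall l X,
  tom F G (tscale l X) m = tscale (tmulK l l) (tom F G X) m.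
Proof.
elim/ltn_ind: m => m IH mn l X.
set l' := fun j => l j.+1; set W := tscale l' X.
rewrite (tom_congr (fun j _ => tscale_head l X j)) tom_add // tom_scaleC //.
rewrite tom_tshift // tbr_scaleC // tbr_tshiftr //.
have -> : tshift (tbr F X W) m = 0.
  case: m IH mn => [|m] IH mn //=.
  by rewrite tbr_tscaler ?tscale_eq0 // => [j jm|]; rewrite ?tbr_alt //; lia.
rewrite scaler0 addr0 tscale_head.
have -> : tmulK l l 0%N = l 0%N ^+ 2 by rewrite /tmulK big_ord1 expr2.
congr (_ + _); case: m IH mn => [|m] IH mn //=.
rewrite tscale_head tmulK_sqS // scale0r add0r.
case: m IH mn => [|m] IH mn //=.
rewrite /W IH //; last by lia.
by apply: tscale_congr => // j jm; rewrite tmulK_sqS.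
Qed.

Definition jacobi_coef s x y z := \sum_(i < s.+1)
  (F i x (F (s - i)%N y z) + F i y (F (s - i)%N z x) + F i z (F (s - i)%N x y)).
Definition ad_om_coef s x y := \sum_(i < s.+1) F i (G (s - i)%N x) y.
Definition ad_ad_coef s x y := \sum_(i < s.+1) F i x (F (s - i)%N x y).

Definition restricted_lie_coef s :=
  (forall x y z, jacobi_coef s x y z = 0) /\
  (forall x y, ad_om_coef s x y = ad_ad_coef s x y).

Definition tjacobi X Y Z m :=
  tbr F X (tbr F Y Z) m + tbr F Y (tbr F Z X) m + tbr F Z (tbr F X Y) m.

Lemma tjacobi_rotate X Y Z m : tjacobi X Y Z m = tjacobi Y Z X m.
Proof. by rewrite /tjacobi -addrA addrC. Qed.

Lemma tjacobi_congr X X' Y Z m : teq m X X' -> tjacobi X Y Z m = tjacobi X' Y Z m.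
Proof.
move=> XX'; rewrite /tjacobi (tbr_congrl _ XX').
rewrite (tbr_congrr Y (fun j jm => tbr_congrr Z (teq_le jm XX'))).
by rewrite (tbr_congrr Z (fun j jm => tbr_congrl Y (teq_le jm XX'))).
Qed.

Section FixedDegreeJacobi.
Variables (m : nat) (mn : (m <= n)%N).

Lemma tjacobi_addl U V Y Z :
  tjacobi (tadd U V) Y Z m = tjacobi U Y Z m + tjacobi V Y Z m.
Proof.
rewrite /tjacobi tbr_addl //.
rewrite (tbr_congrr Y (fun j jm => tbr_addr (leq_trans jm mn) Z U V)).
rewrite (tbr_congrr Z (fun j jm => tbr_addl (leq_trans jm mn) U V Y)).
by rewrite !tbr_addr // [LHS](AC (2*2*2) ((1*3*5)*(2*4*6))).
Qed.

Lemma tjacobi_tshiftl U Y Z : tjacobi (tshift U) Y Z m = tshift (tjacobi U Y Z) m.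
Proof.
rewrite /tjacobi (tbr_tshiftl mn).
rewrite (tbr_congrr Y (fun j jm => tbr_tshiftr (leq_trans jm mn) Z U)).
rewrite (tbr_congrr Z (fun j jm => tbr_tshiftl (leq_trans jm mn) U Y)).
by rewrite !(tbr_tshiftr mn); case: (m) => [|j] /=; rewrite ?addr0.
Qed.

Lemma tjacobi_const x y z : tjacobi (tconst x) (tconst y) (tconst z) m = jacobi_coef m x y z.
Proof.
rewrite /tjacobi !(tbr_constl mn) -!big_split; apply: eq_bigr => i _ /=.
by rewrite !(tbr_const (leq_trans (leq_subr i m) mn)).
Qed.

End FixedDegreeJacobi.

Lemma tjacobi_eq0 : (forall s, (s <= n)%N -> forall x y z, jacobi_coef s x y z = 0) ->
  forall m X Y Z, (m <= n)%N -> tjacobi X Y Z m = 0.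
Proof.
move=> jacobi0; elim/ltn_ind=> m IH X Y Z mn.
have tshift0 U Y' Z' : tjacobi (tshift U) Y' Z' m = 0.
  by rewrite tjacobi_tshiftl //; case: m IH mn => [|m] IH mn //=; apply: IH; lia.
have head X' Y' Z' : tjacobi X' Y' Z' m = tjacobi (tconst (X' 0%N)) Y' Z' m.
  by rewrite (tjacobi_congr Y' Z' (teq_head_tshift X')) tjacobi_addl // tshift0 addr0.
rewrite head tjacobi_rotate head tjacobi_rotate head tjacobi_rotate.
by rewrite tjacobi_const // jacobi0.
Qed.

(* [ad_(om X) Y - ad_X^2 Y]; the sign is irrelevant in characteristic 2. *)
Definition tad_defect X Y m := tbr F (tom F G X) Y m + tbr F X (tbr F X Y) m.

Lemma tad_defect_congrl X X' Y m : teq m X X' -> tad_defect X Y m = tad_defect X' Y m.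
Proof.
move=> XX'; rewrite /tad_defect (tbr_congrl _ XX').
rewrite (tbr_congrl _ (fun j jm => tom_congr (teq_le jm XX'))).
by rewrite (tbr_congrr _ (fun j jm => tbr_congrl _ (teq_le jm XX'))).
Qed.

Lemma tad_defect_congrr X Y Y' m : teq m Y Y' -> tad_defect X Y m = tad_defect X Y' m.
Proof.
move=> YY'; rewrite /tad_defect (tbr_congrr _ YY').
by rewrite (tbr_congrr _ (fun j jm => tbr_congrr _ (teq_le jm YY'))).
Qed.

Section Restricted.
Hypothesis jacobi0 : forall s, (s <= n)%N -> forall x y z, jacobi_coef s x y z = 0.

Section FixedDegreeDefect.
Variables (m : nat) (mn : (m <= n)%N).

Lemma tad_defect_addl U V Y :
  tad_defect (tadd U V) Y m = tad_defect U Y m + tad_defect V Y m.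
Proof.
rewrite /tad_defect (tbr_congrl _ (fun j jm => tom_add (leq_trans jm mn) U V)).
rewrite (tbr_congrr _ (fun j jm => tbr_addl (leq_trans jm mn) U V Y)).
rewrite (tbr_addl mn (tadd (tom F G U) (tom F G V))) (tbr_addl mn (tom F G U)).
rewrite (tbr_addl mn U V) !(tbr_addr mn _ (tbr F U Y)).
have := tjacobi_eq0 jacobi0 U V Y mn; rewrite /tjacobi (tbr_sym mn Y).
rewrite (tbr_congrr V (fun j jm => tbr_sym (leq_trans jm mn) Y U)) => jacobiUVY.
by rewrite [LHS](AC (3*(2*2)) ((1*4)*(2*7)*(5*6*3))) /= jacobiUVY addr0.
Qed.

Lemma tad_defect_addr X Y1 Y2 :
  tad_defect X (tadd Y1 Y2) m = tad_defect X Y1 m + tad_defect X Y2 m.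
Proof.
rewrite /tad_defect (tbr_addr mn (tom F G X)).
rewrite (tbr_congrr X (fun j jm => tbr_addr (leq_trans jm mn) X Y1 Y2)).
by rewrite (tbr_addr mn X (tbr F X Y1)) addrACA.
Qed.

Lemma tad_defect_tshiftl U Y :
  tad_defect (tshift U) Y m = tshift (tshift (tad_defect U Y)) m.
Proof.
rewrite /tad_defect (tbr_congrl _ (fun j jm => tom_tshift (leq_trans jm mn) U)).
rewrite (tbr_congrr _ (fun j jm => tbr_tshiftl (leq_trans jm mn) U Y)).
rewrite !(tbr_tshiftl mn); case: m mn => [|m'] m'n /=; first by rewrite addr0.
rewrite (tbr_tshiftl (ltnW m'n)) (tbr_tshiftr (ltnW m'n)).
by case: m' m'n => [|m'] m'n /=; rewrite ?addr0.
Qed.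

Lemma tad_defect_tshiftr X Y : tad_defect X (tshift Y) m = tshift (tad_defect X Y) m.
Proof.
rewrite /tad_defect (tbr_tshiftr mn).
rewrite (tbr_congrr X (fun j jm => tbr_tshiftr (leq_trans jm mn) X Y)) (tbr_tshiftr mn).
by case: (m) => [|j] /=; rewrite ?addr0.
Qed.

Lemma tad_defect_const x y :
  tad_defect (tconst x) (tconst y) m = ad_om_coef m x y + ad_ad_coef m x y.
Proof.
rewrite /tad_defect (tbr_constr mn) (tbr_constl mn).
congr (_ + _); apply: eq_bigr => i _; have imn := leq_trans (leq_subr i m) mn.
  by rewrite (tom_const imn).
by rewrite (tbr_const imn).
Qed.

End FixedDegreeDefect.

Lemma tad_defect_eq0 :
  (forall s, (s <= n)%N -> forall x y, ad_om_coef s x y = ad_ad_coef s x y) ->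
  forall m X Y, (m <= n)%N -> tad_defect X Y m = 0.
Proof.
move=> ad0; elim/ltn_ind=> m IH X Y mn.
rewrite (tad_defect_congrl Y (teq_head_tshift X)) tad_defect_addl // tad_defect_tshiftl //.
have -> : tshift (tshift (tad_defect (fun j => X j.+1) Y)) m = 0.
  by case: m IH mn => [|[|m]] IH mn //=; apply: IH; lia.
rewrite addr0 (tad_defect_congrr _ (teq_head_tshift Y)).
rewrite tad_defect_addr // tad_defect_tshiftr //.
have -> : tshift (tad_defect (tconst (X 0%N)) (fun j => Y j.+1)) m = 0.
  by case: m IH mn => [|m] IH mn //=; apply: IH; lia.
by rewrite addr0 tad_defect_const // ad0 // addvv_pchar2.
Qed.

End Restricted.

Lemma restricted_lie_truncP :
  restricted_lie_trunc n (tbr F) (tom F G) <->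
  forall s, (s <= n)%N -> restricted_lie_coef s.
Proof.
split=> [[_ [_ [_ [_ [_ [jacobi [_ [_ adom]]]]]]]] s sn | coef].
  split=> [x y z | x y]; first by rewrite -(tjacobi_const sn); apply: jacobi.
  apply/(addv_eq0_pchar2 pcharK2); rewrite -(tad_defect_const sn).
  by apply/(addv_eq0_pchar2 pcharK2); apply: adom.
have jacobi0 s (sn : (s <= n)%N) := (coef s sn).1.
repeat split.
- by move=> X Y Z m mn; apply: (tbr_addl mn).
- by move=> X Y Z m mn; apply: (tbr_addr mn).
- by move=> l X Y m mn; apply: (tbr_tscalel mn).
- by move=> l X Y m mn; apply: (tbr_tscaler mn).
- by move=> X m mn; apply: (tbr_alt mn).
- by move=> X Y Z m mn; apply: (tjacobi_eq0 jacobi0 _ _ _ mn).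
- by move=> l X m mn; apply: (tom_tscale mn).
- by move=> X Y m mn; apply: (tom_add mn).
- move=> X Y m mn; apply/(addv_eq0_pchar2 pcharK2); apply: (tad_defect_eq0 jacobi0) => // t tn.
  exact: (coef t tn).2.
Qed.

End Truncated.

Section Deformation.
Variables (K : fieldType) (A : lmodType K) (mul br : A -> A -> A) (p : A -> A).
Variables (mu : nat -> A -> A -> A) (om : nat -> A -> A).
Hypothesis pcharK2 : (2 \in [pchar K])%N.
Hypothesis poisson : restricted_poisson mul br p.

Definition C2PA_upto N := forall i, (1 <= i <= N)%N -> C2PA mul (mu i) (om i).

Lemma balt_mu N i : C2PA_upto N -> (1 <= i <= N)%N -> bilinear_alt (mu i).
Proof. by move=> C2N iN; case: (C2N i iN) => -[]. Qed.

Lemma balt_fam N : C2PA_upto N -> forall i, (i <= N)%N -> bilinear_alt (fam br mu i).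
Proof.
case: poisson => _ [[balt_br _] _ _ _] _ _; move=> C2N [//|i] iN.
exact: (balt_mu (i := i.+1) C2N iN).
Qed.

Lemma quadZ_famo N : C2PA_upto N -> forall i, (i <= N)%N ->
  forall (a : K) x, famo p om i (a *: x) = a ^+ 2 *: famo p om i x.
Proof.
case: poisson => _ [_ pZ _ _] _ _; move=> C2N [//|i] iN.
by case: (C2N i.+1 iN).
Qed.

Lemma quadD_famo N : C2PA_upto N -> forall i, (i <= N)%N ->
  forall x y, famo p om i (x + y) = famo p om i x + famo p om i y + fam br mu i x y.
Proof.
case: poisson => _ [_ _ _ pD] _ _; move=> C2N [//|i] iN.
by case: (C2N i.+1 iN).
Qed.

Lemma deformation_truncP N : C2PA_upto N ->
  restricted_lie_trunc N (tbr (fam br mu)) (tom (fam br mu) (famo p om)) <->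
  forall s, (s <= N)%N -> restricted_lie_coef (fam br mu) (famo p om) s.
Proof.
move=> C2N.
exact: restricted_lie_truncP (balt_fam C2N) (quadZ_famo C2N) (quadD_famo C2N) pcharK2.
Qed.

Section TopCoefficient.
Variable k : nat.
Hypothesis C2k : C2PA_upto k.+1.

Let balt_br : bilinear_alt br := balt_fam C2k (leq0n k.+1).
Let balt_mu_top : bilinear_alt (mu k.+1) := balt_fam C2k (leqnn k.+1).

Lemma jacobi_coef_top x y z :
  jacobi_coef (fam br mu) k.+1 x y z = obs1 mu k x y z + dCE br (mu k.+1) x y z.
Proof.
rewrite /jacobi_coef /obs1 /dCE big_ord_recl big_ord_recr /= big_add1 /= big_mkord.
rewrite /bump /= add1n subnn subn0 /fam /=.
under eq_bigr => i _ do rewrite add1n subn_eq0 ltnS leqNgt ltn_ord /=.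
rewrite (balt_sym pcharK2 balt_mu_top (br x y) z) (balt_sym pcharK2 balt_mu_top (br x z) y).
rewrite (balt_sym pcharK2 balt_mu_top (br y z) x) (balt_sym pcharK2 balt_mu_top x z).
rewrite (balt_sym pcharK2 balt_br x z).
by rewrite [LHS](AC (3*(1*3)) (4*(7*6*5*1*2*3))).
Qed.

Lemma ad_coef_top x y :
  ad_om_coef (fam br mu) (famo p om) k.+1 x y + ad_ad_coef (fam br mu) k.+1 x y =
  obs2 mu om k x y + delta2 br p (mu k.+1) (om k.+1) x y.
Proof.
rewrite /ad_om_coef /ad_ad_coef /obs2 /delta2.
rewrite big_ord_recl big_ord_recr big_ord_recl big_ord_recr big_add1 big_mkord /=.
rewrite /bump /= !add1n subnn subn0 /fam /famo /=.
rewrite [LHS](AC ((1*2)*(1*2)) ((2*5)*(4*1*3*6))) /= -big_split /=.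
under eq_bigr => i _ do rewrite !subn_eq0 !ltnS leqNgt ltn_ord /=
  (balt_sym pcharK2 (balt_mu (i := i.+1) C2k (ltnW (ltn_ord i)))).
by rewrite (balt_sym pcharK2 balt_br y) (balt_sym pcharK2 balt_mu_top (br x y)).
Qed.

Lemma restricted_lie_coef_top :
  restricted_lie_coef (fam br mu) (famo p om) k.+1 <->
  (forall x y z, obs1 mu k x y z = dCE br (mu k.+1) x y z) /\
  (forall x y, obs2 mu om k x y = delta2 br p (mu k.+1) (om k.+1) x y).
Proof.
split=> -[jacobi0 adom]; split=> [x y z|x y].
- by apply/(addv_eq0_pchar2 pcharK2); rewrite -jacobi_coef_top jacobi0.
- by apply/(addv_eq0_pchar2 pcharK2); rewrite -ad_coef_top adom addvv_pchar2.
- by rewrite jacobi_coef_top jacobi0 addvv_pchar2.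
- by apply/(addv_eq0_pchar2 pcharK2); rewrite ad_coef_top adom addvv_pchar2.
Qed.

End TopCoefficient.
End Deformation.

Theorem mainTheorem7 (K : fieldType) (A : lmodType K)
  (mul br : A -> A -> A) (p : A -> A)
  (mu : nat -> A -> A -> A) (om : nat -> A -> A) (k : nat) :
  2%N \in [pchar K] ->
  restricted_poisson mul br p ->
  (1 <= k)%N ->
  formal_deformation mul br p mu om k ->
  C2PA mul (mu k.+1) (om k.+1) ->
  (formal_deformation mul br p mu om k.+1 <->
   ((forall x y z, obs1 mu k x y z = dCE br (mu k.+1) x y z) /\
    (forall x y, obs2 mu om k x y = delta2 br p (mu k.+1) (om k.+1) x y))).
Proof.
move=> pcharK2 poisson _ [C2k deform_k] C2top.
have C2k1 : C2PA_upto mul mu om k.+1.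
  move=> i /andP[i1 ik1]; have [ik | ki] := leqP i k; first by apply: C2k; rewrite i1.
  by have -> : i = k.+1 by apply/eqP; rewrite eqn_leq ik1.
have coef_k := (deformation_truncP pcharK2 poisson C2k).1 deform_k.
have top_iff := restricted_lie_coef_top pcharK2 poisson C2k1.
rewrite /formal_deformation (deformation_truncP pcharK2 poisson C2k1).
split=> [[_ coef] | /top_iff top]; first by apply/top_iff/coef.
split=> // s; rewrite leq_eqVlt => /orP[/eqP-> // | sk]; exact: coef_k.
Qed.
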